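(* Let $V$ be a reflexive Banach space, $(X_n)_{n\in\mathbb N}$ Banach spaces and $Y$ a Banach space as in the definition below, and let $(V_n)_{n\in\mathbb N}$ be a non-conforming approximation of $V$ with respect to $(X_n)_{n\in\mathbb N}$ and $Y$. Suppose: - $A_n:X_n\to X_n^*$, $n\in\mathbb N$, is non-conforming pseudo-monotone with respect to $(V_n)$ and $A:V\to V^*$; - $B_n:X_n\to X_n^*$, $n\in\mathbb N$, is non-conforming pseudo-monotone with respect to $(V_n)$ and $B:V\to V^*$. Then $A_n+B_n:X_n\to X_n^*$, $n\in\mathbb N$, is non-conforming pseudo-monotone with respect to $(V_n)$ and $A+B:V\to V^*$.
   Context: Non-conforming approximation. Let $V$ be a reflexive Banach space and $(X_n)_{n\in\mathbb N}$ Banach spaces with $V\subseteq X_n$ and $\|\cdot\|_V=\|\cdot\|_{X_n}$ on $V$ for all $n$. Let $Y$ be a Banach space with $X_n\subseteq Y$ for all $n$. A sequence of reflexive Banach spaces $V_n\subseteq X_n$ is called a non-conforming approximation of $V$ with respect to $(X_n)$ and $Y$ if: - (NC.1) there is a dense subset $D\subseteq V$ such that for every $v\in D$ there exist $v_n\in V_n$ with $\|v_n-v\|_{X_n}\to0$; - (NC.2) for each sequence $v_n\in V_{m_n}$, where $(m_n)\subseteq\mathbb N$ with $m_n\to\infty$, the bound $\sup_n\|v_n\|_{X_{m_n}}<\infty$ implies that there exist a subsequence $(v_{n_\ell})$ and $v\in V$ with $v_{n_\ell}\rightharpoonup v$ weakly in $Y$. Non-conforming pseudo-monotonicity. Operators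 $A_n:X_n\to X_n^*$ are called non-conforming pseudo-monotone with respect to $(V_n)$ and $A:V\to V^*$ if the following holds. For each sequence $v_n\in V_{m_n}$ with $m_n\to\infty$ such that - $\sup_n\|v_n\|_{X_{m_n}}<\infty$, - $v_n\rightharpoonup v$ weakly in $Y$ (by (NC.2), such $v$ lies in $V$), and - $\limsup_n\langle A_{m_n}v_n,v_n-v\rangle_{X_{m_n}}\le0$, it follows that $\langle Av,v-z\rangle_V\le\liminf_n\langle A_{m_n}v_n,v_n-z\rangle_{X_{m_n}}$ for all $z\in V$. *)

From HB Require Import structures.
From mathcomp Require Import all_boot all_order all_algebra.
From mathcomp Require Import all_classical all_reals all_analysis.
Set Implicit Arguments. Unset Strict Implicit. Unset Printing Implicit Defensive.
Import Order.TTheory GRing.Theory Num.Theory.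
Import numFieldNormedType.Exports.
Local Open Scope classical_set_scope.
Local Open Scope ring_scope.

Record dual (R : realType) (X : normedModType R) := Dual {
  dfun :> X -> R ;
  dfun_linear : forall (a : R) (u v : X), dfun (a *: u + v) = a * dfun u + dfun v ;
  dfun_cont : continuous dfun }.

Lemma dual_add_linear (R : realType) (X : normedModType R) (f g : dual X) :
  forall (a : R) (u v : X),
    (fun x => f x + g x) (a *: u + v) = a * (fun x => f x + g x) u + (fun x => f x + g x) v.
Proof. move=> a u v /=; rewrite !dfun_linear; rewrite mulrDr; rewrite -!addrA; congr (_ + _);
  rewrite addrCA; rewrite addrA; by []. Qed.

Lemma dual_add_cont (R : realType) (X : normedModType R) (f g : dual X) :
  continuous (fun x => f x + g x).
Proof. move=> x; apply: cvgD; [exact: dfun_cont | exact: dfun_cont]. Qed.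

Definition dual_add (R : realType) (X : normedModType R) (f g : dual X) : dual X :=
  Dual (@dual_add_linear R X f g) (@dual_add_cont R X f g).

(* Reflexivity: the canonical embedding X -> X^** is surjective, i.e. every
   bounded linear functional on X^* (with its operator norm) is an evaluation. *)
Definition reflexive_space (R : realType) (X : normedModType R) : Prop :=
  forall phi : dual X -> R,
    (forall (a : R) (f g h : dual X),
        (forall x, h x = a * f x + g x) -> phi h = a * phi f + phi g) ->
    (exists C : R, forall (f : dual X) (M : R), 0 <= M ->
        (forall x, `|f x| <= M * `|x|) -> `|phi f| <= C * M) ->
    exists x : X, forall f : dual X, phi f = f x.

Definition weak_cvg (R : realType) (Y : normedModType R) (y : nat -> Y) (l : Y) : Prop :=
  forall f : dual Y, f (y n) @[n --> \oo] --> f l.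

Definition lin_map (R : realType) (U W : normedModType R) (f : U -> W) : Prop :=
  forall (a : R) (u v : U), f (a *: u + v) = a *: f u + f v.

(* Standing setting: V ⊆ X_n (isometrically), X_n ⊆ Y, all inclusions
   being linear injections, compatible with each other (jV = jX n \o iV n). *)
Definition nc_setting (R : realType) (V : completeNormedModType R)
    (X : nat -> completeNormedModType R) (Y : completeNormedModType R)
    (iV : forall n, V -> X n) (jX : forall n, X n -> Y) (jV : V -> Y) : Prop :=
  [/\ forall n, lin_map (iV n) /\ (forall v, `|iV n v| = `|v|),
      forall n, lin_map (jX n) /\ injective (jX n),
      lin_map jV /\ injective jV &
      forall n v, jX n (iV n v) = jV v].

Definition tends_to_infty (m : nat -> nat) : Prop :=
  forall N : nat, exists n0 : nat, forall n : nat, (n0 <= n)%N -> (N <= m n)%N.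

(* (V_n) non-conforming approximation of V w.r.t. (X_n) and Y;
   V_n ⊆ X_n is given by the isometric linear injection eV n. *)
Definition nc_approx (R : realType) (V : completeNormedModType R)
    (X : nat -> completeNormedModType R) (Y : completeNormedModType R)
    (iV : forall n, V -> X n) (jX : forall n, X n -> Y) (jV : V -> Y)
    (Vn : nat -> completeNormedModType R) (eV : forall n, Vn n -> X n) : Prop :=
  [/\ forall n, reflexive_space (Vn n),
      forall n, lin_map (eV n) /\ injective (eV n) /\ (forall u, `|eV n u| = `|u|),
      exists D : set V, dense D /\
        forall v, D v -> exists vn : forall n, Vn n,
          `|eV n (vn n) - iV n v| @[n --> \oo] --> (0 : R) &
      forall (m : nat -> nat) (vn : forall n, Vn (m n)),
        tends_to_infty m ->
        (exists C : R, forall n, `|eV (m n) (vn n)| <= C) ->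
        exists (phi : nat -> nat) (v : V),
          (forall k, (phi k < phi k.+1)%N) /\
          weak_cvg (fun l => jX (m (phi l)) (eV (m (phi l)) (vn (phi l)))) (jV v)].

Definition nc_pseudo_monotone (R : realType) (V : completeNormedModType R)
    (X : nat -> completeNormedModType R) (Y : completeNormedModType R)
    (iV : forall n, V -> X n) (jX : forall n, X n -> Y) (jV : V -> Y)
    (Vn : nat -> completeNormedModType R) (eV : forall n, Vn n -> X n)
    (An : forall n, X n -> dual (X n)) (A : V -> dual V) : Prop :=
  forall (m : nat -> nat) (vn : forall n, Vn (m n)) (v : V),
    tends_to_infty m ->
    (exists C : R, forall n, `|eV (m n) (vn n)| <= C) ->
    weak_cvg (fun n => jX (m n) (eV (m n) (vn n))) (jV v) ->
    (limn_esup (fun n => (An (m n) (eV (m n) (vn n))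
                  (eV (m n) (vn n) - iV (m n) v))%:E) <= 0)%E ->
    forall z : V,
      ((A v (v - z))%:E <= limn_einf (fun n => (An (m n) (eV (m n) (vn n))
                  (eV (m n) (vn n) - iV (m n) z))%:E))%E.

(* If limsup <A_n v_n, v_n - v> were positive, then along a subsequence
   <A_n v_n, v_n - v> > e > 0, so limsup <B_n v_n, v_n - v> <= -e along it.
   The pseudo-monotonicity of (B_n) applies to that subsequence, and tested
   with z = v it gives liminf <B_n v_n, v_n - v> >= 0, a contradiction.
   Hence both limsups are <= 0, so both (A_n) and (B_n) satisfy the
   conclusion, and the liminf of a sum dominates the sum of the liminfs. *)

From mathcomp Require Import all_boot all_order all_algebra.
From mathcomp Require Import all_classical all_reals all_analysis.
From mathcomp Require Import lra.
Import Order.TTheory GRing.Theory Num.Theory.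
Import numFieldNormedType.Exports.
Local Open Scope ring_scope.

Section limn_esup_einf_extra.
Context {R : realType}.
Implicit Types (u v : (\bar R)^nat) (a b : R^nat) (phi : nat -> nat).
Local Open Scope classical_set_scope.
Local Open Scope ereal_scope.

Lemma limn_esup_le_esups u n : limn_esup u <= esups u n.
Proof.
have -> : limn_esup u = ereal_inf (range (esups u)).
  by rewrite limn_esup_lim; apply: cvg_lim => //; exact: cvg_esups_inf.
by apply: ereal_inf_lbound; exists n.
Qed.

Lemma le_limn_esup u v : (forall n, u n <= v n) -> limn_esup u <= limn_esup v.
Proof.
move=> uv; rewrite !limn_esup_lim; apply: lee_lim; try exact: is_cvg_esups.
apply: nearW => n; apply: ge_ereal_sup => _ [m /= nm <-].
by apply: le_trans (uv m) _; apply: ereal_sup_ubound; exists m.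
Qed.

Lemma limn_esup_subseq u {phi} : (forall k, k <= phi k)%N ->
  limn_esup (u \o phi) <= limn_esup u.
Proof.
move=> phi_ge; rewrite !limn_esup_lim; apply: lee_lim; try exact: is_cvg_esups.
apply: nearW => n; apply: ge_ereal_sup => _ [m /= nm <-].
by apply: ereal_sup_ubound; exists (phi m) => //=; rewrite (leq_trans nm).
Qed.

Lemma limn_esupDr u (x : R) :
  limn_esup (fun n => u n + x%:E) = limn_esup u + x%:E.
Proof.
apply: oppe_inj; rewrite -!limn_einfN oppeD ?fin_num_adde_defl //.
have -> : -%E \o (fun n => u n + x%:E) = fun n => (- x)%:E + (-%E \o u) n.
  by apply/funext => n /=; rewrite oppeD ?fin_num_adde_defl // addeC.
by rewrite limn_einf_shift // limn_einfN EFinN addeC.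
Qed.

Lemma limn_esup_gt_subseq u (x : R) : x%:E < limn_esup u ->
  exists phi, (forall k, k <= phi k)%N /\ (forall k, x%:E < u (phi k)).
Proof.
move=> xu.
suff /choice[phi phiP] : forall k, exists m, (k <= m)%N /\ x%:E < u m.
  by exists phi; split => k; have [] := phiP k.
move=> k; have := lt_le_trans xu (limn_esup_le_esups u k).
by move=> /ereal_sup_gt[_ [m /= km <-] xum]; exists m.
Qed.

Lemma limn_einfD_ge u v : limn_einf u + limn_einf v <= limn_einf (u \+ v).
Proof.
have [->|uNy] := eqVneq (limn_einf u) -oo; first by rewrite addNye leNye.
have [->|vNy] := eqVneq (limn_einf v) -oo; first by rewrite addeNy leNye.
rewrite !limn_einf_lim in uNy vNy *.
have uv_def : limn (einfs u) +? limn (einfs v).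
  by rewrite /adde_def (negbTE uNy) (negbTE vNy) !andbF.
rewrite -limeD //; try exact: is_cvg_einfs.
apply: lee_lim; [|exact: is_cvg_einfs|].
  by apply: is_cvgeD => //; exact: is_cvg_einfs.
apply: nearW => n; apply: le_ereal_inf_tmp => _ [m /= nm <-].
by apply: leeD; apply: ereal_inf_lbound; exists m.
Qed.

Lemma ereal_gt0_EFin_lt x : 0 < x -> exists2 e : R, (0 < e)%R & e%:E < x.
Proof.
case: x => [r| |] //; last by exists 1%R; rewrite ?ltry.
by rewrite lte_fin => r0; exists (r / 2)%R; rewrite ?lte_fin; lra.
Qed.

Lemma limn_esup_le0_of_sum {a b} :
  limn_esup (fun n => (a n + b n)%:E) <= 0 ->
  (forall phi, (forall k, k <= phi k)%N ->
     limn_esup (fun k => (b (phi k))%:E) <= 0 ->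
     0 <= limn_einf (fun k => (b (phi k))%:E)) ->
  limn_esup (fun n => (a n)%:E) <= 0.
Proof.
move=> ab_le0 b_subseq; rewrite leNgt; apply/negP.
move=> /ereal_gt0_EFin_lt[e e0 /limn_esup_gt_subseq[phi [phi_ge a_gt]]].
have b_le : limn_esup (fun k => (b (phi k))%:E) <= (- e)%:E.
  apply: (le_trans (le_limn_esup _
    (fun k => (a (phi k) + b (phi k))%:E + (- e)%:E) _)).
    by move=> k; rewrite -EFinD lee_fin; have := a_gt k; rewrite lte_fin; lra.
  rewrite limn_esupDr -[leRHS]add0e leeD2r //.
  exact: le_trans (limn_esup_subseq (fun n => (a n + b n)%:E) phi_ge) ab_le0.
have b_le0 : limn_esup (fun k => (b (phi k))%:E) <= 0.
  by apply: le_trans b_le _; rewrite lee_fin; lra.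
have := le_trans (b_subseq phi phi_ge b_le0) (le_trans (limn_einf_sup _) b_le).
by rewrite lee_fin; lra.
Qed.

End limn_esup_einf_extra.

Lemma dfun0 (R : realType) (X : normedModType R) (f : dual X) : f 0 = 0.
Proof.
by have := dfun_linear f 1 0 0; rewrite scale1r addr0 mul1r => ?; lra.
Qed.

Lemma cvgn_ge_id {phi : nat -> nat} : (forall k, k <= phi k)%N ->
  (phi k @[k --> \oo] --> \oo)%classic.
Proof.
by move=> phi_ge P [N _ NP]; exists N => // k /= Nk; apply/NP/(leq_trans Nk).
Qed.

Lemma tends_to_infty_subseq {m phi : nat -> nat} : (forall k, k <= phi k)%N ->
  tends_to_infty m -> tends_to_infty (m \o phi).
Proof.
move=> phi_ge m_oo N; have [n0 n0P] := m_oo N.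
by exists n0 => n n0n; apply/n0P/(leq_trans n0n).
Qed.

Lemma weak_cvg_subseq {R : realType} {Y : normedModType R}
    {y : nat -> Y} {l : Y} {phi : nat -> nat} : (forall k, k <= phi k)%N ->
  weak_cvg y l -> weak_cvg (y \o phi) l.
Proof.
by move=> phi_ge y_l f; exact: cvg_comp _ _ (cvgn_ge_id phi_ge) (y_l f).
Qed.

Section nc_pseudo_monotone_subseq.
Context {R : realType} {V : completeNormedModType R}.
Context {X : nat -> completeNormedModType R} {Y : completeNormedModType R}.
Context {iV : forall n, V -> X n} {jX : forall n, X n -> Y} {jV : V -> Y}.
Context {Vn : nat -> completeNormedModType R} {eV : forall n, Vn n -> X n}.
Context {An : forall n, X n -> dual (X n)} {A : V -> dual V}.
Hypothesis An_pm : nc_pseudo_monotone iV jX jV eV An A.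

Lemma nc_pseudo_monotone_subseq_liminf_ge0 {m : nat -> nat}
    {vn : forall n, Vn (m n)} {v : V} :
  tends_to_infty m ->
  (exists C : R, forall n, `|eV (m n) (vn n)| <= C) ->
  weak_cvg (fun n => jX (m n) (eV (m n) (vn n))) (jV v) ->
  forall phi : nat -> nat, (forall k, k <= phi k)%N ->
  (limn_esup (fun k => (An (m (phi k)) (eV (m (phi k)) (vn (phi k)))
     (eV (m (phi k)) (vn (phi k)) - iV (m (phi k)) v))%:E) <= 0)%E ->
  (0 <= limn_einf (fun k => (An (m (phi k)) (eV (m (phi k)) (vn (phi k)))
     (eV (m (phi k)) (vn (phi k)) - iV (m (phi k)) v))%:E))%E.
Proof.
move=> m_oo [C vn_le] vn_v phi phi_ge sup_le0.
have := An_pm (m \o phi) (fun k => vn (phi k)) v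
  (tends_to_infty_subseq phi_ge m_oo) (ex_intro _ C (fun k => vn_le (phi k)))
  (weak_cvg_subseq phi_ge vn_v) sup_le0 v.
by rewrite subrr dfun0.
Qed.

End nc_pseudo_monotone_subseq.

Theorem lemma4p3 (R : realType) (V : completeNormedModType R)
    (X : nat -> completeNormedModType R) (Y : completeNormedModType R)
    (iV : forall n, V -> X n) (jX : forall n, X n -> Y) (jV : V -> Y)
    (Vn : nat -> completeNormedModType R) (eV : forall n, Vn n -> X n)
    (An Bn : forall n, X n -> dual (X n)) (A B : V -> dual V) :
  reflexive_space V ->
  nc_setting iV jX jV ->
  nc_approx iV jX jV eV ->
  nc_pseudo_monotone iV jX jV eV An A ->
  nc_pseudo_monotone iV jX jV eV Bn B ->
  nc_pseudo_monotone iV jX jV eV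
    (fun n x => dual_add (An n x) (Bn n x)) (fun v => dual_add (A v) (B v)).
Proof.
move=> _ _ _ An_pm Bn_pm m vn v m_oo vn_bd vn_v /= sum_le0 z.
have a_le0 := limn_esup_le0_of_sum sum_le0
  (nc_pseudo_monotone_subseq_liminf_ge0 Bn_pm m_oo vn_bd vn_v).
have b_le0 : (limn_esup (fun n =>
    (Bn (m n) (eV (m n) (vn n)) (eV (m n) (vn n) - iV (m n) v))%:E) <= 0)%E.
  move: sum_le0; under eq_fun do rewrite addrC; move=> ba_le0.
  exact: limn_esup_le0_of_sum ba_le0
    (nc_pseudo_monotone_subseq_liminf_ge0 An_pm m_oo vn_bd vn_v).
under eq_fun do rewrite EFinD.
apply: le_trans (limn_einfD_ge _ _); rewrite EFinD leeD //.
- exact: An_pm m_oo vn_bd vn_v a_le0 z.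
- exact: Bn_pm m_oo vn_bd vn_v b_le0 z.
Qed.
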